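(* There is an algorithm which, given $\delta\in(0,1)$ and a sequence of $m$ events, produces non-decreasing estimates $v_t$ (for $t=1,\dots,m$) of the number $t$ of events seen so far such that, for any fixed $t\in[m]$, with probability at least $1-\delta$, $$\frac{\delta}{12\log m}\,t\le v_t\le\frac1\delta\,t.$$ The algorithm uses $O(\log\log m)$ bits of space. *)

From mathcomp Require Import all_boot all_order all_algebra.
From mathcomp Require Import reals exp.
Set Implicit Arguments. Unset Strict Implicit. Unset Printing Implicit Defensive.
Import Order.TTheory GRing.Theory Num.Theory.
Local Open Scope ring_scope.

(* A randomized streaming counter with n.+1 memory states ('I_n.+1),
   i.e. about log2 (n.+1) bits of memory.  It starts in state [init];
   on each event it moves from state i to state j with probability P i j;
   after each event it outputs the estimate [est] of its current state. *)

Definition log2 {R : realType} (x : R) : R := ln x / ln 2.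

Definition stochastic {R : realType} n (P : 'M[R]_n.+1) : Prop :=
  (forall i j, 0 <= P i j) /\ (forall i, \sum_j P i j = 1).

(* estimates are non-decreasing along every possible run *)
Definition monotone_est {R : realType} n (P : 'M[R]_n.+1) (est : 'I_n.+1 -> R)
  : Prop := forall i j, 0 < P i j -> est i <= est j.

Definition state_dist {R : realType} n (P : 'M[R]_n.+1) (init : 'I_n.+1) (t : nat)
  : 'rV[R]_n.+1 := (delta_mx 0 init : 'rV[R]_n.+1) *m (P ^+ t).

Definition prob_est {R : realType} n (P : 'M[R]_n.+1) (init : 'I_n.+1)
  (est : 'I_n.+1 -> R) (t : nat) (A : R -> bool) : R :=
  \sum_(j | A (est j)) state_dist P init t 0 j.

From mathcomp Require Import all_boot all_order all_algebra.
From mathcomp Require Import reals exp.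
From mathcomp Require Import ring lra.
Set Implicit Arguments. Unset Strict Implicit. Unset Printing Implicit Defensive.
Import Order.TTheory GRing.Theory Num.Theory.
Local Open Scope ring_scope.

(* Morris' approximate counter, capped at L = floor (log2 m): an event moves
   state i to i + 1 with probability 2^-i, and state i reports 2^i / 4; the
   L + 1 states fit in O(log log m) bits.  The probability that the state
   exceeds l grows by at most 2^-l per event, hence is at most t 2^-l after t
   events.  The potential 2^l - 2^(min i l) is nonnegative and drops in
   expectation by P(state < l) at each event, a probability that never
   increases, hence t P(X_t < l) <= 2^l.  Choosing 2^l within a factor 2 of
   4 t / delta, resp. of 4 delta t / (12 ln m), bounds each tail by delta / 2. *)

Section ChainExpectation.
Variables (R : realType) (n : nat) (P : 'M[R]_n.+1) (init : 'I_n.+1).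
Hypothesis P_stochastic : stochastic P.

Definition expect (t : nat) (f : 'I_n.+1 -> R) : R :=
  \sum_j state_dist P init t 0 j * f j.

Definition step (f : 'I_n.+1 -> R) (i : 'I_n.+1) : R := \sum_j P i j * f j.

Lemma expect0 f : expect 0 f = f init.
Proof.
rewrite /expect /state_dist expr0 mulmx1 (bigD1 init) //= mxE !eqxx mul1r.
by rewrite big1 ?addr0 // => j /negbTE jN; rewrite mxE jN andbF mul0r.
Qed.

Lemma expectS t f : expect t.+1 f = expect t (step f).
Proof.
rewrite /expect {1}/state_dist exprSr mulmxA.
under eq_bigr => j _ do rewrite mxE mulr_suml.
rewrite exchange_big /=; apply: eq_bigr => i _.
by rewrite /step mulr_sumr; apply: eq_bigr => j _; rewrite mulrA.
Qed.

Lemma state_dist_ge0 t j : 0 <= state_dist P init t 0 j.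
Proof.
have [P_ge0 _] := P_stochastic.
elim: t j => [|t IH] j; first by rewrite /state_dist expr0 mulmx1 mxE ler0n.
rewrite /state_dist exprSr mulmxA mxE; apply: sumr_ge0 => i _.
exact: mulr_ge0 (IH i) (P_ge0 i j).
Qed.

Lemma eq_expect t f g : f =1 g -> expect t f = expect t g.
Proof. by move=> fg; apply: eq_bigr => j _; rewrite fg. Qed.

Lemma ler_expect t f g : (forall i, f i <= g i) -> expect t f <= expect t g.
Proof.
by move=> fg; apply: ler_sum => j _; rewrite ler_wpM2l ?state_dist_ge0.
Qed.

Lemma expect_ge0 t f : (forall i, 0 <= f i) -> 0 <= expect t f.
Proof. by move=> f_ge0; apply: sumr_ge0 => j _; rewrite mulr_ge0 ?state_dist_ge0. Qed.

Lemma expectD t f g : expect t (fun i => f i + g i) = expect t f + expect t g.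
Proof. by rewrite /expect -big_split; apply: eq_bigr => j _; rewrite mulrDr. Qed.

Lemma expectN t f : expect t (fun i => - f i) = - expect t f.
Proof. by rewrite /expect -sumrN; apply: eq_bigr => j _; rewrite mulrN. Qed.

Lemma expectB t f g : expect t (fun i => f i - g i) = expect t f - expect t g.
Proof. by rewrite expectD expectN. Qed.

Lemma step_cst c : step (fun _ => c) =1 (fun _ => c).
Proof. by move=> i; rewrite /step -mulr_suml P_stochastic.2 mul1r. Qed.

Lemma expect_cst t c : expect t (fun _ => c) = c.
Proof.
by elim: t => [|t IH]; rewrite ?expect0 // expectS (eq_expect _ (step_cst c)).
Qed.

Lemma prob_estE (est : 'I_n.+1 -> R) t (A : R -> bool) :
  prob_est P init est t A = expect t (fun j => (A (est j))%:R).
Proof.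
by rewrite /prob_est big_mkcond; apply: eq_bigr => j _; case: (A _); rewrite ?mulr1 ?mulr0.
Qed.

Lemma prob_est_union_bound (est : 'I_n.+1 -> R) t (A B C : R -> bool) :
    (forall v, ~~ A v -> B v || C v) ->
  1 - prob_est P init est t B - prob_est P init est t C <= prob_est P init est t A.
Proof.
move=> ABC; rewrite !prob_estE.
apply: le_trans (_ : expect t (fun j => 1 - (B (est j))%:R - (C (est j))%:R) <= _).
  by rewrite !expectB expect_cst.
apply: ler_expect => j.
by have /implyP := ABC (est j); case: (A _) (B _) (C _) => [] [] [] //= _; lra.
Qed.

Lemma expect_drift_le f c t :
  (forall i, step f i <= f i + c) -> expect t f <= f init + t%:R * c.
Proof.
move=> drift; elim: t => [|t IH]; first by rewrite expect0 mul0r addr0.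
rewrite expectS (le_trans (ler_expect _ drift)) // expectD expect_cst.
by rewrite mulrSr mulrDl mul1r addrA lerD2r.
Qed.

Lemma expect_potential_le h u t :
    (forall i, 0 <= h i) -> (forall i, step h i <= h i - u i) ->
    (forall i, step u i <= u i) ->
  t%:R * expect t u <= h init.
Proof.
move=> h_ge0 h_decr u_decr.
suff : expect t h + t%:R * expect t u <= h init by have := expect_ge0 t h_ge0; lra.
elim: t => [|t IH]; first by rewrite expect0 mul0r addr0.
rewrite !expectS; apply: le_trans IH.
have Eh : expect t (step h) <= expect t h - expect t u.
  by rewrite -expectB; apply: ler_expect.
have Eu : t.+1%:R * expect t (step u) <= t.+1%:R * expect t u.
  by rewrite ler_wpM2l ?ler0n ?ler_expect.
by move: Eu; rewrite mulrSr mulrDl mul1r; lra.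
Qed.

End ChainExpectation.

Lemma pow2_bracket (R : realType) (x : R) :
  1 <= x -> exists l : nat, x <= 2 ^+ l.+1 <= 2 * x.
Proof.
move=> x_ge1.
have ex_pow : exists l, x <= 2 ^+ l.+1.
  exists (Num.Def.archi_bound x).
  apply/ltW/(lt_le_trans (archi_boundP (le_trans ler01 x_ge1))).
  rewrite -natrX ler_nat expnS; apply/ltnW/(leq_trans (ltn_expl _ (ltnSn 1))).
  exact: leq_pmull.
case: (ex_minnP ex_pow) => l x_le min_l; exists l; rewrite x_le /=.
case: l x_le min_l => [|l] _ min_l; first by rewrite expr1; lra.
rewrite exprS ler_pM2l // leNgt; apply/negP => /ltW /min_l.
by rewrite ltnn.
Qed.

Section MorrisCounter.
Variables (R : realType) (L : nat).

Definition morris_incr (i : nat) : R := if (i < L)%N then (2 ^+ i)^-1 else 0.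

Definition morris : 'M[R]_L.+1 := \matrix_(i, j)
  ((val j == val i)%:R * (1 - morris_incr i) + (val j == (val i).+1)%:R * morris_incr i).

Definition morris_est (i : 'I_L.+1) : R := 2 ^+ i / 4.

Lemma morris_incr_ge0 i : 0 <= morris_incr i.
Proof. by rewrite /morris_incr; case: ifP; rewrite ?invr_ge0 ?exprn_ge0. Qed.

Lemma morris_incr_le i : morris_incr i <= (2 ^+ i)^-1.
Proof. by rewrite /morris_incr; case: ifP; rewrite ?invr_ge0 ?exprn_ge0. Qed.

Lemma morris_incr_le1 i : morris_incr i <= 1.
Proof.
by rewrite (le_trans (morris_incr_le i)) // invf_le1 ?exprn_ege1 ?exprn_gt0 ?ler1n.
Qed.

Lemma morris_stepE (f : nat -> R) (i : 'I_L.+1) :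
  step morris (fun j : 'I_L.+1 => f j) i =
  (1 - morris_incr i) * f i + morris_incr i * f i.+1.
Proof.
rewrite /step; under eq_bigr => j _ do rewrite mxE mulrDl.
rewrite big_split /=; congr (_ + _).
  rewrite (bigD1 i) //= eqxx mul1r mulrC big1 ?addr0 // => j /negbTE.
  by rewrite -val_eqE => ->; rewrite !mul0r.
have [iL|Li] := ltnP i L; last first.
  by rewrite /morris_incr ltnNge Li /= mul0r big1 // => j _; rewrite mulr0 mul0r.
rewrite (bigD1 (Ordinal (iL : (val i).+1 < L.+1)%N)) //= eqxx mul1r mulrC.
by rewrite big1 ?addr0 // => j /negbTE; rewrite -val_eqE /= => ->; rewrite !mul0r.
Qed.

Lemma morris_stochastic : stochastic morris.
Proof.
split=> [i j|i].
  by rewrite mxE addr_ge0 // mulr_ge0 ?ler0n ?subr_ge0 ?morris_incr_le1 ?morris_incr_ge0.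
have := morris_stepE (fun _ => 1) i; rewrite !mulr1 subrK => <-.
by apply: eq_bigr => j _; rewrite mulr1.
Qed.

Lemma morris_monotone : monotone_est morris morris_est.
Proof.
move=> i j; rewrite mxE; case: eqP => [/val_inj -> //|_].
case: eqP => [j_succ _|_]; last by rewrite !mul0r addr0 ltxx.
by rewrite ler_wpM2r ?invr_ge0 ?ler0n // j_succ exprS ler_peMl ?exprn_ge0 ?ler1n.
Qed.

Lemma morris_upper_tail l t :
  expect morris ord0 t (fun i => (l < i)%:R) <= t%:R / 2 ^+ l.
Proof.
apply: le_trans (expect_drift_le ord0 morris_stochastic
  (f := fun i => (l < i)%:R) (c := (2 ^+ l)^-1) t _) _.
  move=> i; rewrite (morris_stepE (fun i => (l < i)%:R)).
  have c_ge0 : 0 <= (2 ^+ l)^-1 :> R by rewrite invr_ge0 exprn_ge0.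
  have [li|il] := ltnP l i; first by rewrite ltnW // !mulr1 subrK lerDl.
  rewrite mulr0 !add0r ltnS; case: leqP => [li|_]; last by rewrite mulr0.
  by rewrite mulr1 (_ : l = i) ?morris_incr_le //; apply/eqP; rewrite eqn_leq li il.
by rewrite ltn0 add0r mulrC.
Qed.

Lemma morris_lower_tail l t : (l <= L)%N ->
  t%:R * expect morris ord0 t (fun i => (i < l)%:R) <= 2 ^+ l.
Proof.
move=> lL.
(* [h] loses exactly 1 in expectation per step taken below [l]. *)
pose h (i : nat) : R := 2 ^+ l - 2 ^+ minn i l.
apply: le_trans (expect_potential_le ord0 morris_stochastic
  (h := fun i => h i) (u := fun i => (i < l)%:R) t _ _ _) _.
- by move=> i; rewrite subr_ge0 ler_eXn2l ?ltr1n ?geq_minr.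
- move=> i; rewrite morris_stepE /h; have [il|li] := ltnP i l; last first.
    by rewrite !(minn_idPr _) ?(leq_trans li) // subrr !mulr0 addr0 subr0.
  rewrite /morris_incr (leq_trans il lL) (minn_idPl il) /=.
  have pow_neq0 : (2 ^+ i : R) != 0 by rewrite expf_neq0 ?pnatr_eq0.
  by rewrite le_eqVlt; apply/orP; left; apply/eqP; rewrite exprS; field.
- move=> i; rewrite (morris_stepE (fun k => (k < l)%:R)).
  have [il|li] := ltnP i l; last first.
    by rewrite ltnNge (leq_trans li) ?mulr0 ?addr0.
  have incr_ge0 := morris_incr_ge0 i; have incr_le1 := morris_incr_le1 i.
  have : ((i.+1 < l)%:R : R) <= 1 by rewrite lern1 leq_b1.
  rewrite mulr1 /=; nra.
by rewrite /h /= min0n expr0 lerBlDr lerDl.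
Qed.

Lemma morris_est_upper_tail t b : 1 <= 4 * b ->
  prob_est morris ord0 morris_est t (fun v => b < v) <= t%:R / (2 * b).
Proof.
move=> b_ge; have [l /andP [bl lb]] := pow2_bracket b_ge.
rewrite prob_estE.
apply: le_trans (ler_expect ord0 morris_stochastic t (g := fun i => (l < i)%:R) _) _.
  move=> i; rewrite /morris_est; case: ltnP => [_|il]; first by rewrite lern1 leq_b1.
  have est_le : 2 ^+ i / 4 <= b.
    rewrite ler_pdivrMr // (le_trans (_ : _ <= 2 ^+ l)) ?ler_eXn2l ?ltr1n //.
    by move: lb; rewrite exprS; lra.
  by rewrite ltNge est_le.
apply: le_trans (morris_upper_tail l t) _.
rewrite ler_wpM2l ?ler0n // lef_pV2 ?posrE ?exprn_gt0 //; last by lra.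
by move: bl; rewrite exprS; lra.
Qed.

Lemma morris_est_lower_tail t a : 0 <= a -> 8 * a < 2 ^+ L.+1 ->
  t%:R * prob_est morris ord0 morris_est t (fun v => v < a) <= 8 * a.
Proof.
move=> a_ge0 aL; rewrite prob_estE.
have [a_small|a_large] := ltP (4 * a) 1.
  suff -> : expect morris ord0 t (fun i => (morris_est i < a)%R%:R) = 0.
    by rewrite mulr0 mulr_ge0.
  rewrite -(expect_cst ord0 morris_stochastic t 0); apply: eq_expect => i.
  suff : a <= morris_est i by rewrite leNgt => /negbTE ->.
  by rewrite ler_pdivlMr // (le_trans _ (exprn_ege1 _ _)) ?ler1n //; lra.
have [l /andP [al la]] := pow2_bracket a_large.
have lL : (l < L)%N.
  have : (2 : R) ^+ l.+1 < 2 ^+ L.+1 by apply: le_lt_trans la _; lra.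
  by rewrite ltr_eXn2l ?ltr1n.
apply: le_trans (ler_wpM2l (ler0n _ t) (ler_expect ord0 morris_stochastic t
  (g := fun i => (i < l.+1)%:R) _)) _.
  move=> i; case: ltnP => [_|li]; first by rewrite lern1 leq_b1.
  rewrite lern0 ltNge /morris_est ler_pdivlMr // mulrC (le_trans al) //.
  by rewrite ler_eXn2l ?ltr1n.
by apply: le_trans (morris_lower_tail t lL) _; lra.
Qed.

Lemma morris_est_between t a b :
    (0 < t)%N -> 0 <= a -> 8 * a < 2 ^+ L.+1 -> 1 <= 4 * b ->
  1 - 8 * a / t%:R - t%:R / (2 * b) <=
  prob_est morris ord0 morris_est t (fun v => (a <= v) && (v <= b)).
Proof.
move=> t_gt0 a_ge0 aL b_ge.
have covered v : ~~ ((a <= v) && (v <= b)) -> (v < a) || (b < v).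
  by rewrite negb_and -!ltNge.
apply: le_trans (prob_est_union_bound ord0 morris_stochastic morris_est t covered).
have lower := morris_est_lower_tail t a_ge0 aL.
have upper := morris_est_upper_tail t b_ge.
rewrite -ler_pdivlMl ?ltr0n // mulrC in lower.
by rewrite lerB // lerB.
Qed.

Lemma morris_accuracy t delta K :
    (0 < t < 2 ^ L.+1)%N -> 0 < delta < 1 -> 4 / 3 <= K ->
  1 - delta <= prob_est morris ord0 morris_est t
    (fun v => (delta / (12 * K) * t%:R <= v) && (v <= delta^-1 * t%:R)).
Proof.
move=> /andP [t_gt0 t_lt] /andP [delta_gt0 delta_lt1] K_ge.
have t_ge1 : 1 <= t%:R :> R by rewrite ler1n.
have t_lt' : t%:R < 2 ^+ L.+1 :> R by rewrite -natrX ltr_nat.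
set a := delta / (12 * K) * t%:R; set b := delta^-1 * t%:R.
have a_eq : 8 * a = 2 * delta / (3 * K) * t%:R by rewrite /a; field; lra.
have b_eq : t%:R / (2 * b) = delta / 2 by rewrite /b; field; lra.
have ratio_le : 2 * delta / (3 * K) <= delta / 2.
  by rewrite ler_pdivrMr ?mulr_gt0 //; [nra | lra].
have ratio_ge0 : 0 <= 2 * delta / (3 * K) by rewrite divr_ge0 //; lra.
apply: le_trans (morris_est_between t_gt0 _ _ _).
- by rewrite b_eq a_eq mulfK ?pnatr_eq0 -?lt0n //; lra.
- by rewrite /a mulr_ge0 // divr_ge0 //; lra.
- by rewrite a_eq; nra.
- have : 1 <= delta^-1 by rewrite invf_ge1 // ltW.
  by rewrite /b; nra.
Qed.

End MorrisCounter.

Lemma ln2_ge_half (R : realType) : 1 / 2 <= ln (2 : R).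
Proof.
have half_gt : -1 < - (1 / 2) :> R by lra.
have := le_ln1Dx half_gt; rewrite (_ : 1 + - (1 / 2) = (2 : R)^-1); last by field.
by rewrite lnV ?posrE //; lra.
Qed.

Lemma ler_log2 (R : realType) (x y : R) : 0 < x -> x <= y -> log2 x <= log2 y.
Proof.
move=> x_gt0 xy; rewrite /log2 ler_wpM2r ?invr_ge0 ?ln_ge0 ?ler1n //.
by rewrite ler_ln ?posrE // (lt_le_trans x_gt0).
Qed.

Lemma log2X (R : realType) (x : R) k : 0 < x -> log2 (x ^+ k) = k%:R * log2 x.
Proof. by move=> x_gt0; rewrite /log2 lnXn // mulrA mulr_natl. Qed.

Lemma log2_ge_nat (R : realType) (m L : nat) : (2 ^ L <= m)%N -> L%:R <= log2 (m%:R : R).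
Proof.
move=> Lm; have ln2_gt0 : 0 < ln (2 : R) by have := ln2_ge_half R; lra.
have log2_2 : log2 (2 : R) = 1 by rewrite /log2 divff // lt0r_neq0.
apply: le_trans (_ : log2 ((2 : R) ^+ L) <= _); first by rewrite log2X // log2_2 mulr1.
by rewrite ler_log2 ?exprn_gt0 // -natrX ler_nat.
Qed.

Lemma log2_addr1_le (R : realType) (x y : R) :
  3 <= x -> x <= y -> log2 (x + 1) <= 2 * log2 y.
Proof.
by move=> x_ge3 xy; rewrite -log2X; [apply: ler_log2; nra | lra].
Qed.

Theorem lemma5p1 (R : realType) :
  exists (C : R) (N : nat), forall m : nat, (N <= m)%N ->
  forall delta : R, 0 < delta < 1 ->
  exists (n : nat) (P : 'M[R]_n.+1) (init : 'I_n.+1) (est : 'I_n.+1 -> R),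
    [/\ stochastic P,
        monotone_est P est,
        log2 (n.+1)%:R <= C * log2 (log2 m%:R) &
        forall t : nat, (1 <= t <= m)%N ->
          1 - delta <=
          prob_est P init est t
            (fun v => (delta / (12 * ln m%:R) * t%:R <= v) && (v <= delta^-1 * t%:R))].
Proof.
exists 2, 8%N => m m_ge8 delta delta01.
have m_gt0 : (0 < m)%N by apply: leq_trans m_ge8.
set L := trunc_log 2 m.
have Lm : (2 ^ L <= m)%N := trunc_logP (ltnSn 1) m_gt0.
have mL : (m < 2 ^ L.+1)%N := trunc_log_ltn m (ltnSn 1).
have L_ge3 : (3 <= L)%N := trunc_log_max (ltnSn 1) (m_ge8 : (2 ^ 3 <= m)%N).
have log2m_ge : L%:R <= log2 (m%:R : R) := log2_ge_nat R Lm.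
exists L, (morris R L), ord0, (@morris_est R L); split.
- exact: morris_stochastic.
- exact: morris_monotone.
- by rewrite -addn1 natrD log2_addr1_le ?ler_nat.
move=> t /andP [t_gt0 t_le]; apply: morris_accuracy => //.
  by rewrite t_gt0 (leq_ltn_trans t_le mL).
have ln2_ge := ln2_ge_half R; have L_ge3' : 3 <= L%:R :> R by rewrite ler_nat.
by move: log2m_ge; rewrite /log2 ler_pdivlMr; nra.
Qed.
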